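(* Let $X$ be a finite set with $|X|\geq 3$ and let $N,N'$ be binary level-1 networks on $X$ with $\mathcal R(N)\subseteq\mathcal R(N')$. Let $v$ be a split vertex of $N$ that is the head of a cut arc of $N$, and $v'$ a split vertex of $N'$ that is the head of a cut arc of $N'$. Then $C_N(v)$ and $C_{N'}(v')$ are compatible, i.e. $C_N(v)\cap C_{N'}(v')\in\{\emptyset,C_N(v),C_{N'}(v')\}$. Moreover, if $C_N(v)\subsetneq C_{N'}(v')$, then $C_N(v)$ is not a maximal SN-set of $\mathcal R(N)$.
   Context: A leaf of a DAG is a vertex of in-degree 1 and out-degree 0. For a finite set $X$, a phylogenetic network on $X$ is a DAG (no loops, no multiple arcs) with a unique vertex (the root) of in-degree 0, which has out-degree at least 2, whose set of leaves is $X$, and in which every other non-leaf vertex is either a split vertex (in-degree 1, out-degree $\geq 2$) or a hybrid vertex (in-degree $\geq 2$, out-degree $\geq 1$). It is binary if the root and all split vertices have out-degree 2 and every hybrid vertex has in-degree 2 and out-degree 1. $U(N)$ denotes the underlying undirected graph. A binary level-1 network is a binary phylogenetic network in which every biconnected component of $U(N)$ contains at most one hybrid vertex; by standing convention every cycle of $U(N)$ has at least four vertices. An arc is a cut arc if deleting it disconnects $U(N)$. For a vertex $v$, $C_N(v)$ is the set of leaves reachable from $v$ by a directed path. For distinct $a,b,c\in X$, the triplet $ab|c$ is consistent with $N$ if there exist distinct vertices $v,w$ of $N$ and directed paths from $v$ to $c$, from $v$ to $w$, from $w$ to $a$ and from $w$ to $b$ such that no two of these paths share an interior vertex; $\mathcal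 R(N)$ is the set of all triplets consistent with $N$. For a set $\mathcal R$ of triplets on $X$, a subset $S\subseteq X$ is an SN-set of $\mathcal R$ if there is no triplet $xy|z\in\mathcal R$ with $x,z\in S$ and $y\notin S$; it is non-trivial if $S\neq X$, and a non-trivial SN-set is maximal if no non-trivial SN-set strictly contains it. *)

From HB Require Import structures.
From mathcomp Require Import all_boot.
Set Implicit Arguments. Unset Strict Implicit. Unset Printing Implicit Defensive.

Record network (X : finType) := Network {
  vtx : finType;
  arc : rel vtx;
  lf : X -> vtx }.

Section Net.
Variables (X : finType) (N : network X).
Local Notation V := (vtx N).
Local Notation arcN := (@arc X N).
Local Notation lfN := (@lf X N).

Definition indeg (v : V) := #|[set u | arcN u v]|.
Definition outdeg (v : V) := #|[set w | arcN v w]|.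
Definition is_root (v : V) := indeg v == 0.
Definition is_leaf (v : V) := (indeg v == 1) && (outdeg v == 0).
Definition is_split (v : V) := (indeg v == 1) && (2 <= outdeg v).
Definition is_hybrid (v : V) := (2 <= indeg v) && (1 <= outdeg v).

Definition uarc (u w : V) := arcN u w || arcN w u.

(* acyclic (this also excludes loops) *)
Definition dag := forall u w : V, arcN u w -> ~~ connect arcN w u.

Definition phylo_network :=
  [/\ dag,
      exists r : V, [/\ is_root r, 2 <= outdeg r & forall u, is_root u -> u = r],
      injective lfN,
      (forall v : V, is_leaf v <-> exists x, lfN x = v)
    & forall v : V, [\/ is_root v, is_leaf v, is_split v | is_hybrid v]].

Definition binary_network :=
  phylo_network /\
  forall v : V, [/\ is_root v -> outdeg v = 2,
                    is_split v -> outdeg v = 2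
                  & is_hybrid v -> indeg v = 2 /\ outdeg v = 1].

Definition induced (S : {set V}) : rel V :=
  [rel u w | [&& u \in S, w \in S & uarc u w]].
Definition sconnected (S : {set V}) :=
  forall u w, u \in S -> w \in S -> connect (induced S) u w.
Definition biconnected (S : {set V}) :=
  [/\ 2 <= #|S|, sconnected S & forall w, w \in S -> sconnected (S :\ w)].
Definition bicomponent (S : {set V}) :=
  biconnected S /\ forall T, biconnected T -> S \subset T -> T = S.

Definition binary_level1 :=
  [/\ binary_network,
      (forall S, bicomponent S -> #|[set h in S | is_hybrid h]| <= 1)
    & (* standing convention: every cycle of U(N) has >= 4 vertices,
         i.e. U(N) has no triangle *)
      forall a b c : V, uarc a b -> uarc b c -> uarc c a -> False].

Definition cut_arc (u w : V) :=
  arcN u w /\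
  ~ (forall a b : V,
       connect [rel x y | uarc x y && ~~ (((x == u) && (y == w)) || ((x == w) && (y == u)))] a b).

Definition Cl (v : V) : {set X} := [set x | connect arcN v (lfN x)].

(* directed path s = x0 -> x1 -> ... -> xk = t, given by p = [x1;...;xk] *)
Definition dpath (s t : V) (p : seq V) := path arcN s p && (last s p == t).
(* interior vertices of the path s :: p *)
Definition interior (p : seq V) := take (size p).-1 p.
Definition sdisj (p q : seq V) := all (fun x => x \notin q) p.

Definition consistent (a b c : X) : Prop :=
  [/\ a != b, a != c, b != c &
    exists (v w : V) (pc pw pa pb : seq V),
      [/\ v != w, dpath v (lfN c) pc, dpath v w pw, dpath w (lfN a) pa
        & dpath w (lfN b) pb] /\
      [/\ sdisj (interior pc) (interior pw), sdisj (interior pc) (interior pa),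
          sdisj (interior pc) (interior pb), sdisj (interior pw) (interior pa)
        & sdisj (interior pw) (interior pb) /\ sdisj (interior pa) (interior pb)]].
End Net.

(* SN-sets of a set of triplets R (xy|z in R  iff  R x y z) *)
Definition SNset (X : finType) (R : X -> X -> X -> Prop) (S : {set X}) :=
  forall x y z, R x y z -> x \in S -> z \in S -> y \in S.
Definition maximal_SNset (X : finType) (R : X -> X -> X -> Prop) (S : {set X}) :=
  [/\ SNset R S, S != setT &
      forall T, SNset R T -> T != setT -> S \subset T -> T = S].

(* A cut arc u -> v is the only arc entering the set of descendants of v, so
   every directed path from a vertex outside that set to a leaf of C_N(v) runs
   through v.  Hence C_N(v) is an SN-set of R(N): in a witness for xy|z with
   x, z below v and y not, the paths to x and to z would both pass through v.
   Conversely, lowest common ancestors witness ab|c for every arc u -> v with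
   a, b in C_N(v) and c outside.  Since R(N) is contained in R(N'), C_N'(v') is
   an SN-set of R(N), and the triplets ab|c split off C_N(v) force the two
   clusters to be compatible.  For maximality it remains that C_N'(v') <> X:
   otherwise u' would have v' as its only child, and a lowest vertex outside
   the cluster other than u' would have u' as its only child, giving two
   adjacent hybrids, hence two hybrids in one bicomponent. *)

From Pilot Require Import Defs.
From HB Require Import structures.
From mathcomp Require Import all_boot.
Set Implicit Arguments. Unset Strict Implicit. Unset Printing Implicit Defensive.

Section ConnectMinimal.
Variables (T : finType) (r : rel T).
Hypothesis r_acyclic : antisymmetric (connect r).

Lemma connect_minimal (P : pred T) s0 : P s0 ->
  exists2 z, P z & forall t, P t -> connect r z t -> t = z.
Proof.
move=> Ps0; case: (arg_minnP (fun z => #|[set y | connect r z y]|) Ps0) => z Pz zmin.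
exists z => // t Pt zt; apply: r_acyclic; rewrite zt andbT.
apply: contraTT (zmin t Pt) => tz; rewrite -ltnNge; apply: proper_card.
apply/properP; split; first by apply/subsetP=> y; rewrite !inE; apply: connect_trans.
by exists z; rewrite !inE ?connect0.
Qed.

End ConnectMinimal.

Section SNsets.
Variables (X : finType) (R : X -> X -> X -> Prop).

Lemma SNset_sub (R' : X -> X -> X -> Prop) S :
  (forall x y z, R x y z -> R' x y z) -> SNset R' S -> SNset R S.
Proof. by move=> RR' S_SN x y z /RR'; apply: S_SN. Qed.

Lemma SNset_compatible (A B : {set X}) : SNset R A ->
  (forall a b c, a \in B -> b \in B -> a != b -> c \notin B -> R a b c) ->
  [\/ B :&: A = set0, B :&: A = B | B :&: A = A].
Proof.
move=> A_SN B_triplets.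
have [BA|/subsetPn[a aB aA]] := boolP (B \subset A); first by apply: Or32; apply/setIidPl.
have [AB|/subsetPn[c cA cB]] := boolP (A \subset B); first by apply: Or33; apply/setIidPr.
apply: Or31; apply/setP => b; rewrite !inE; apply/negbTE/andP => -[bB bA].
have ba : b != a by apply: contraNneq aA => <-.
by move: aA; rewrite (A_SN b a c (B_triplets _ _ _ bB aB ba cB) bA cA).
Qed.

Lemma proper_not_maximal_SNset (S T : {set X}) :
  SNset R T -> T != setT -> S \proper T -> ~ maximal_SNset R S.
Proof.
move=> T_SN T_neq ST [_ _ S_max].
have TS := S_max T T_SN T_neq (proper_sub ST).
by rewrite TS properxx in ST.
Qed.

End SNsets.

Section Network.
Variables (X : finType) (N : network X).
Local Notation V := (vtx N).
Local Notation e := (@Defs.arc X N).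
Local Notation lfN := (@lf X N).
Local Notation ua := (@uarc X N).

Definition sconnectedb (S : {set V}) :=
  [forall a in S, forall b in S, connect (induced S) a b].

Lemma sconnectedP (S : {set V}) : reflect (sconnected S) (sconnectedb S).
Proof.
apply: (iffP forall_inP) => [S_conn a b aS bS | S_conn a aS].
  exact: (forall_inP (S_conn a aS)).
by apply/forall_inP => b bS; apply: S_conn.
Qed.

Definition biconnectedb (S : {set V}) :=
  [&& 1 < #|S|, sconnectedb S & [forall w in S, sconnectedb (S :\ w)]].

Lemma biconnectedP (S : {set V}) : reflect (biconnected S) (biconnectedb S).
Proof.
apply: (iffP and3P) => -[S_card S_conn S_cut]; split => //; try exact/sconnectedP.
  by move=> w wS; apply/sconnectedP; apply: (forall_inP S_cut).
by apply/forall_inP => w wS; apply/sconnectedP; apply: S_cut.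
Qed.

Lemma bicomponent_exists (S : {set V}) :
  biconnected S -> exists2 T, bicomponent T & S \subset T.
Proof.
move/biconnectedP => S_bi.
have [T /maxsetP[/biconnectedP T_bi T_max] ST] := maxset_exists S_bi.
by exists T => //; split => // T' /biconnectedP; apply: T_max.
Qed.

Lemma induced_sym (S : {set V}) : symmetric (induced S).
Proof. by move=> x y; rewrite /induced /= /uarc orbC andbCA. Qed.

Lemma sconnected_card1 (S : {set V}) : #|S| <= 1 -> sconnected S.
Proof. by move=> S_card a b aS bS; rewrite (card_le1_eqP S_card a b aS bS) connect0. Qed.

Lemma uarc_biconnected a b : ua a b -> a != b -> biconnected [set a; b].
Proof.
move=> ab a_neq_b; split; first by rewrite cards2 a_neq_b.
  have ab_conn : connect (induced [set a; b]) a b.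
    by apply: connect1; rewrite /induced /= !inE !eqxx orbT ab.
  move=> x y; rewrite !inE => /orP[]/eqP-> /orP[]/eqP->; rewrite ?connect0 //.
  by rewrite (sym_connect_sym (induced_sym _)).
move=> w wS; apply: sconnected_card1.
by have := cardsD1 w [set a; b]; rewrite wS cards2 a_neq_b add1n => -[<-].
Qed.

Lemma interiorP (s : V) p t : t \in p -> t != last s p -> t \in interior p.
Proof.
case/lastP: p => [//|p l]; rewrite /interior size_rcons last_rcons -cats1 take_size_cat //.
by rewrite mem_cat inE => /orP[// | /eqP ->]; rewrite eqxx.
Qed.

Lemma sdisj_interior (p q : seq V) : sdisj p q -> sdisj (interior p) (interior q).
Proof. by move/allP => pq; apply/allP => t /mem_take /pq; apply: contra; apply: mem_take. Qed.

Lemma outdeg_single t w : e t w -> (forall y, e t y -> y = w) -> outdeg t = 1.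
Proof.
move=> tw t_only; rewrite /outdeg (_ : [set y | e t y] = [set w]) ?cards1 //.
by apply/setP => y; rewrite !inE; apply/idP/eqP => [/t_only | ->].
Qed.

Lemma outdeg1_hybrid (t : V) : binary_network N -> outdeg t = 1 -> is_hybrid t.
Proof.
case=> [[_ _ _ _ kinds] degs] t_out; have [root2 split2 _] := degs t.
by case: (kinds t) => [/root2|/andP[_]|/split2|//]; rewrite t_out.
Qed.

Definition uarc_off (u w : V) : rel V :=
  [rel x y | ua x y && ~~ (((x == u) && (y == w)) || ((x == w) && (y == u)))].

Lemma uarc_off_sym u w : symmetric (uarc_off u w).
Proof.
move=> x y; rewrite /uarc_off /= /uarc; congr (_ && ~~ _); first exact: orbC.
by rewrite orbC andbC [(x == u) && _]andbC.
Qed.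

Hypothesis N_dag : dag N.

Lemma connect_antisym : antisymmetric (connect e).
Proof.
move=> a b /andP[/connectP[[|y p] //= /andP[ay yp] ->] ba].
by have := N_dag ay; rewrite (connect_trans _ ba) //; apply: (path_connect yp); apply: mem_last.
Qed.

Lemma arc_neq a b : e a b -> a != b.
Proof. by move=> ab; apply: contraNneq (N_dag ab) => ->; rewrite connect0. Qed.

Lemma hybrid_arc_hybrid x y :
  (forall S : {set V}, bicomponent S -> #|[set h in S | is_hybrid h]| <= 1) ->
  e x y -> is_hybrid x -> ~~ is_hybrid y.
Proof.
move=> level1 xy hx; apply/negP => hy.
have xy_bi : biconnected [set x; y] by apply: uarc_biconnected (arc_neq xy); rewrite /uarc xy.
have [T T_comp xyT] := bicomponent_exists xy_bi.
have := level1 T T_comp; apply/negP; rewrite -ltnNge.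
apply: leq_trans (subset_leq_card (_ : [set x; y] \subset _)); first by rewrite cards2 arc_neq.
by apply/subsetP => t txy; rewrite inE (subsetP xyT) //; case/set2P: txy => ->.
Qed.

Lemma path_mem_neq s p t : path e s p -> t \in p -> t != s.
Proof.
case: p => [//|y p] /= /andP[sy yp] tp; apply: contraTneq (N_dag sy) => ts.
by rewrite negbK -ts (path_connect yp tp).
Qed.

Lemma path_connect_last s p t : path e s p -> t \in s :: p -> connect e t (last s p).
Proof.
rewrite inE => sp /predU1P[-> | tp]; first by apply: (path_connect sp); apply: mem_last.
case/splitPr: tp sp => p1 p2; rewrite cat_path last_cat /= => /and3P[_ _ tp2].
by apply: (path_connect tp2); apply: mem_last.
Qed.

Lemma dpath_connect s t p : dpath s t p -> connect e s t.
Proof. by case/andP=> sp /eqP <-; apply: (path_connect sp); apply: mem_last. Qed.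

Lemma common_ancestor_dpaths r0 s t : connect e r0 s -> connect e r0 t ->
  exists z p q, [/\ connect e r0 z, dpath z s p, dpath z t q & sdisj p q].
Proof.
move=> r0s r0t.
pose common := [pred x | [&& connect e r0 x, connect e x s & connect e x t]].
have common_r0 : common r0 by rewrite /= connect0 r0s r0t.
have [z /and3P[r0z /connectP[p zp Ep] /connectP[q zq Eq]] zmin] :=
  connect_minimal connect_antisym common_r0.
exists z, p, q; split; rewrite /dpath ?zp ?zq -?Ep -?Eq ?eqxx //.
apply/allP => x xp; apply/negP => xq; apply: (negP (path_mem_neq zp xp)).
have zx : connect e z x by rewrite (path_connect zp) // inE xp orbT.
apply/eqP/zmin => //; rewrite /= (connect_trans r0z zx) Ep Eq.
by rewrite !path_connect_last // inE ?xp ?xq orbT.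
Qed.

Section ArcDeletion.
Variables u v : V.
Hypothesis uv : e u v.

Lemma uarc_off_arc x y : e x y -> (x, y) != (u, v) -> uarc_off u v x y.
Proof.
move=> xy xy_neq; rewrite /uarc_off /= /uarc xy negb_or -xpair_eqE xy_neq /=.
by apply/andP => -[/eqP xv /eqP yu]; move: (N_dag uv); rewrite -xv -yu connect1.
Qed.

Lemma uarc_off_connect_out s t :
  connect e s t -> ~~ connect e v t -> connect (uarc_off u v) s t.
Proof.
move=> /connectP[p sp ->] vt; apply/connectP; exists p => //.
apply: (sub_in_path (P := [pred x | ~~ connect e v x])) (sp).
  move=> x y _ vy xy; apply: uarc_off_arc xy _.
  by apply: contraNneq vy => -[_ ->]; rewrite connect0.
by apply/allP => x xp; apply: contra vt => vx; apply: connect_trans vx (path_connect_last sp xp).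
Qed.

Lemma uarc_off_connect_in s t :
  connect e v s -> connect e s t -> connect (uarc_off u v) s t.
Proof.
move=> vs /connectP[p sp ->]; apply/connectP; exists p => //.
apply: (sub_in_path (P := connect e v)) (sp).
  move=> x y vx _ xy; apply: uarc_off_arc xy _.
  by apply: contraTneq vx => -[-> _]; apply: N_dag uv.
by apply/allP => x xp; apply: connect_trans vs (path_connect sp xp).
Qed.

End ArcDeletion.

Section Phylogenetic.
Hypothesis N_phylo : phylo_network N.

Lemma root_connect : exists r : V, forall t, connect e r t.
Proof.
have [_ [r [_ _ r_uniq]] _ _ _] := N_phylo.
exists r => t.
have rev_antisym : antisymmetric (connect [rel x y | e y x]).
  by move=> a b; rewrite !connect_rev /= andbC; apply: connect_antisym.
have [z zt zmin] := connect_minimal rev_antisym (connect0 e t : [pred s | connect e s t] t).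
rewrite -(r_uniq z) // /is_root /indeg cards_eq0; apply/eqP/setP => p; rewrite !inE.
apply/negbTE/negP => pz.
have pz_eq : p = z.
  by apply: zmin; [exact: connect_trans (connect1 pz) zt | rewrite connect_rev /= connect1].
by move/arc_neq: pz; rewrite pz_eq eqxx.
Qed.

Lemma leaf_arcF x y : e (lfN x) y = false.
Proof.
have [_ _ _ leafE _] := N_phylo.
have /andP[_ /eqP/cards0_eq/setP/(_ y)] := (leafE (lfN x)).2 (ex_intro _ x erefl).
by rewrite !inE.
Qed.

Lemma connect_leaf t : exists x, connect e t (lfN x).
Proof.
have [_ [r [_ r_out r_uniq]] _ leafE kinds] := N_phylo.
have [z tz zmin] := connect_minimal connect_antisym (connect0 e t : [pred s | connect e t s] t).
have z_out : outdeg z = 0.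
  apply/eqP; rewrite cards_eq0; apply/eqP/setP => y; rewrite !inE.
  apply/negbTE/negP => zy.
  have yz : y = z by apply: zmin; [exact: connect_trans tz (connect1 zy) | exact: connect1].
  by move/arc_neq: zy; rewrite yz eqxx.
case: (kinds z) => [z_root|/(leafE z)[x zE]|/andP[_]|/andP[_]]; rewrite ?z_out //.
  by move: r_out; rewrite -(r_uniq z z_root) z_out.
by exists x; rewrite zE.
Qed.

Lemma consistent_of_arc u v a b c : e u v ->
  a \in Cl v -> b \in Cl v -> a != b -> c \notin Cl v -> consistent N a b c.
Proof.
move=> uv; rewrite !inE => va vb ab vc.
split => //; try by apply: contraNneq vc => <-.
(* The middle path of the witness runs z ~> u -> v ~> w. *)
have [w [pa [pb [vw wpa wpb pa_pb]]]] := common_ancestor_dpaths va vb.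
have [r r_conn] := root_connect.
have [z [pc [pu [_ zpc zpu pc_pu]]]] := common_ancestor_dpaths (r_conn (lfN c)) (r_conn u).
have /connectP[pvw vpvw Ew] := vw.
pose pw := pu ++ v :: pvw.
have zpw : dpath z w pw.
  have /andP[pu_path /eqP Eu] := zpu.
  by rewrite /dpath cat_path last_cat /= Eu pu_path uv vpvw -Ew eqxx.
have pc_out t : t \in pc -> ~~ connect e v t.
  case/andP: zpc => zpc /eqP Ec tpc; apply: contra vc => vt.
  by rewrite -Ec (connect_trans vt) // (path_connect_last zpc) // inE tpc orbT.
have pw_w t : t \in pw -> connect e t w.
  by case/andP: zpw => zpw /eqP Epw tpw; rewrite -Epw (path_connect_last zpw) // inE tpw orbT.
have below_w q y : dpath w y q -> sdisj pc q /\ sdisj pw q.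
  case/andP=> wq _.
  have strictly_below t : t \in q -> connect e w t /\ t != w.
    by move=> tq; rewrite (path_mem_neq wq) // (path_connect wq) // inE tq orbT.
  split; apply/allP => t tp; apply/negP => /strictly_below[wt tw].
    by move: (pc_out t tp); rewrite (connect_trans vw wt).
  by apply: (negP tw); apply/eqP/connect_antisym; rewrite wt pw_w.
have [pc_pa pw_pa] := below_w _ _ wpa; have [pc_pb pw_pb] := below_w _ _ wpb.
have pc_pw : sdisj pc pw.
  apply/allP => t tpc; rewrite mem_cat inE; apply/or3P => -[tpu | /eqP tv | tpvw].
  - by move/allP: pc_pu => /(_ t tpc); rewrite tpu.
  - by move: (pc_out t tpc); rewrite tv connect0.
  - by move: (pc_out t tpc); rewrite (path_connect vpvw) // inE tpvw orbT.
exists z, w, pc, pw, pa, pb; split; last by split; try split; apply: sdisj_interior.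
split => //; apply: contraNneq (N_dag uv) => zw.
by rewrite (connect_trans vw) // -zw (dpath_connect zpu).
Qed.

Section CutArc.
Variables u v : V.
Hypothesis uv_cut : cut_arc u v.

Lemma cut_arc_entry a b :
  e a b -> ~~ connect e v a -> connect e v b -> (a, b) = (u, v).
Proof.
have [uv not_conn] := uv_cut; move=> ab va vb.
have [//|ab_neq] := eqVneq (a, b) (u, v); exfalso; apply: not_conn.
have [r r_conn] := root_connect.
have E_sym := sym_connect_sym (uarc_off_sym u v).
suff r_E t : connect (uarc_off u v) r t.
  by move=> s t; rewrite (connect_trans _ (r_E t)) // E_sym.
have [vt|] := boolP (connect e v t); last exact: uarc_off_connect_out.
apply: connect_trans (uarc_off_connect_out uv (r_conn a) va) _.
apply: connect_trans (connect1 (uarc_off_arc uv ab ab_neq)) _.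
apply: connect_trans (_ : connect _ b v) (uarc_off_connect_in uv (connect0 e v) vt).
by rewrite E_sym; apply: uarc_off_connect_in (connect0 e v) vb.
Qed.

Lemma path_enter_cut s p : path e s p -> ~~ connect e v s ->
  connect e v (last s p) -> v \in p /\ connect e s u.
Proof.
elim: p s => [|y p IH] s /=; first by move=> _ /negP vs /vs.
case/andP=> sy yp vs vp; have [vy|vy] := boolP (connect e v y).
  by case: (cut_arc_entry sy vs vy) => -> ->; rewrite inE eqxx connect0.
have [vp' yu] := IH y yp vy vp.
by rewrite inE vp' orbT (connect_trans (connect1 sy) yu).
Qed.

Lemma Cl_SNset : 0 < outdeg v -> SNset (consistent N) (Cl v).
Proof.
move=> v_out a b c [_ _ _ [z [w [pc [pw [pa [pb [[_ zc zw wa wb] [_ pc_pa _ _ _]]]]]]]]].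
rewrite !inE => va vc; apply: contraT => vb.
have vw : ~~ connect e v w by apply: contra vb => vw; apply: connect_trans vw (dpath_connect wb).
have vz : ~~ connect e v z by apply: contra vw => vz; apply: connect_trans vz (dpath_connect zw).
have v_leaf x : v != lfN x.
  by case/card_gt0P: v_out => y; rewrite inE; apply: contraTneq => ->; rewrite leaf_arcF.
have v_in s q x : dpath s (lfN x) q -> ~~ connect e v s -> connect e v (lfN x) ->
    v \in interior q.
  case/andP=> sq /eqP qx vs vx; apply: (interiorP (s := s)); last by rewrite qx.
  by case: (path_enter_cut sq vs); rewrite ?qx.
by move/allP: pc_pa => /(_ v (v_in _ _ _ zc vz vc)); rewrite (v_in _ _ _ wa vw va).
Qed.

Lemma Cl_neq_setT : binary_level1 N -> Cl v != setT.
Proof.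
case=> N_binary level1 _; apply/negP => /eqP Cl_all; have uv := uv_cut.1.
have vu : ~~ connect e v u := N_dag uv.
have to_u t : ~~ connect e v t -> connect e t u.
  move=> vt; have [x /connectP[p tp Ex]] := connect_leaf t.
  have vx : connect e v (lfN x) by move: (in_setT x); rewrite -Cl_all inE.
  by case: (path_enter_cut tp vt); rewrite -?Ex.
have u_only y : e u y -> y = v.
  move=> uy; have [vy|/to_u yu] := boolP (connect e v y).
    by case: (cut_arc_entry uy vu vy).
  by move: (N_dag uy); rewrite yu.
have hu : is_hybrid u := outdeg1_hybrid N_binary (outdeg_single uv u_only).
pose upper := [pred t | ~~ connect e v t && (t != u)].
have [p pu] : exists p, e p u.
  by case/andP: hu => /ltnW/card_gt0P[p]; rewrite inE; exists p.
have upper_p : upper p.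
  rewrite /= arc_neq // andbT; apply: contra vu => vp.
  exact: connect_trans vp (connect1 pu).
have [x /andP[vx xu] xmin] := connect_minimal connect_antisym upper_p.
have x_only y : e x y -> y = u.
  move=> xy; have [vy|vy] := boolP (connect e v y).
    by case: (cut_arc_entry xy vx vy) => xu_eq; rewrite xu_eq eqxx in xu.
  apply/eqP; apply: contraTT (arc_neq xy) => yu; rewrite negbK.
  by rewrite (xmin y) ?connect1 //= vy.
have xu_arc : e x u.
  case/connectP: (to_u x vx) => [[|y q] /=].
    by move=> _ xu_eq; rewrite -xu_eq eqxx in xu.
  by case/andP => xy _ _; rewrite -(x_only y xy).
have hx : is_hybrid x := outdeg1_hybrid N_binary (outdeg_single xu_arc x_only).
by move: (hybrid_arc_hybrid level1 xu_arc hx); rewrite hu.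
Qed.

End CutArc.

End Phylogenetic.
End Network.

Theorem mainTheorem6 (X : finType) (N N' : network X) (v : vtx N) (v' : vtx N') :
  3 <= #|X| ->
  binary_level1 N -> binary_level1 N' ->
  (forall a b c : X, consistent N a b c -> consistent N' a b c) ->
  is_split v -> (exists u, cut_arc u v) ->
  is_split v' -> (exists u', cut_arc u' v') ->
  [\/ Cl v :&: Cl v' = set0, Cl v :&: Cl v' = Cl v | Cl v :&: Cl v' = Cl v'] /\
  (Cl v \proper Cl v' -> ~ maximal_SNset (consistent N) (Cl v)).
Proof.
move=> _ N_level1 N'_level1 R_sub _ [u uv_cut] v'_split [u' uv'_cut].
have [[N_phylo _] _ _] := N_level1; have N_dag : dag N by case: N_phylo.
have [[N'_phylo _] _ _] := N'_level1; have N'_dag : dag N' by case: N'_phylo.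
have v'_out : 0 < outdeg v' by case/andP: v'_split => _; apply: leq_trans.
have Cl_v'_SN : SNset (consistent N) (Cl v').
  exact: SNset_sub R_sub (Cl_SNset N'_dag N'_phylo uv'_cut v'_out).
split.
  apply: SNset_compatible (Cl_v'_SN) _ => a b c.
  exact: (consistent_of_arc N_dag N_phylo uv_cut.1).
exact: proper_not_maximal_SNset Cl_v'_SN (Cl_neq_setT N'_dag N'_phylo uv'_cut N'_level1).
Qed.
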